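(* Let $G$ be a finitely generated group and $H$ a subgroup of finite index in $G$, and let $f\in\mathfrak{F}$. If $H\in\mathcal{B}_f$, then $G\in\mathcal{B}_f$.
   Context: $\mathfrak{F}$ is the set of nondecreasing functions from some interval $[Q,\infty)\cap\mathbb{N}$ to the nonnegative reals; $g\preceq f$ means there exist $N\ge0$ and positive integers $K,M$ with $g(n)\le Kf(Mn)$ for all $n\ge N$. For a group $G$ with finite generating set $A$, $S=A\cup A^{-1}$, $\pi:S^*\to G$ the evaluation map and $d_A$ the word metric: a Cayley automatic representation is a bijection $\psi:L\to G$ from a regular $L\subseteq S^*$ such that for each $a\in A$ the relation $\{(\psi^{-1}(g),\psi^{-1}(ga)) : g\in G\}$ is FA-recognizable (i.e., the language of convolutions — parallel readings of the two strings with the shorter padded by a new symbol — is regular). Its function is $h(n)=\max\{d_A(\pi(w),\psi(w)): w\in L,|w|\le n\}$, and $G\in\mathcal{B}_f$ means some Cayley automatic representation (for some finite generating set; this is independent of the choice) has $h\preceq f$. *)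

From Stdlib Require Import Reals.
From mathcomp Require Import all_boot.
Set Implicit Arguments. Unset Strict Implicit. Unset Printing Implicit Defensive.

Record grp := Grp {
  gcar :> Type;
  gmul : gcar -> gcar -> gcar;
  gone : gcar;
  ginv : gcar -> gcar;
  gmulA : forall x y z, gmul x (gmul y z) = gmul (gmul x y) z;
  gmul1 : forall x, gmul gone x = x;
  gmulV : forall x, gmul (ginv x) x = gone
}.

Definition is_hom (H G : grp) (phi : H -> G) : Prop :=
  forall x y, phi (gmul x y) = gmul (phi x) (phi y).

Definition finite_index_image (H G : grp) (phi : H -> G) : Prop :=
  exists reps : list G, forall g : G,
    exists r, List.In r reps /\ exists h : H, g = gmul (phi h) r.

(* A finite generating set A is given by k elements gens : 'I_k -> G.
   A letter (i, false) stands for a_i, (i, true) for a_i^{-1}. *)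
Definition letter (k : nat) := ('I_k * bool)%type.

Definition letter_val (G : grp) k (gens : 'I_k -> G) (l : letter k) : G :=
  if l.2 then ginv (gens l.1) else gens l.1.

Definition eval_word (G : grp) k (gens : 'I_k -> G) (w : seq (letter k)) : G :=
  foldr (fun l acc => gmul (letter_val gens l) acc) (gone G) w.

Definition generates (G : grp) k (gens : 'I_k -> G) : Prop :=
  forall g : G, exists w, eval_word gens w = g.

Definition finitely_generated (G : grp) : Prop :=
  exists k (gens : 'I_k -> G), generates gens.

(* d_A(x, y) <= m  (word metric: length of a shortest word for x^{-1} y) *)
Definition word_dist_le (G : grp) k (gens : 'I_k -> G) (x y : G) (m : nat) : Prop :=
  exists w, size w <= m /\ eval_word gens w = gmul (ginv x) y.

Record dfa (T : finType) := Dfa {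
  dstate : finType;
  dstart : dstate;
  dfinal : pred dstate;
  dtrans : dstate -> T -> dstate
}.

Definition dfa_accepts (T : finType) (D : dfa T) (w : seq T) : bool :=
  @dfinal T D (foldl (@dtrans T D) (@dstart T D) w).

Definition regular (T : finType) (L : seq T -> Prop) : Prop :=
  exists D : dfa T, forall w, L w <-> dfa_accepts D w.

(* convolution of two strings: parallel reading, the shorter one padded
   with the new symbol None *)
Definition conv (T : Type) (u v : seq T) : seq (option T * option T) :=
  [seq (nth None (map Some u) i, nth None (map Some v) i)
     | i <- iota 0 (maxn (size u) (size v))].

Definition fa_recognizable (T : finType) (Rel : seq T -> seq T -> Prop) : Prop :=
  regular (fun x : seq (option T * option T) => exists u v, Rel u v /\ x = conv u v).

Definition cayley_automatic_rep (G : grp) k (gens : 'I_k -> G)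
    (L : seq (letter k) -> Prop) (psi : seq (letter k) -> G) : Prop :=
  [/\ regular L,
      (forall u v, L u -> L v -> psi u = psi v -> u = v),
      (forall g : G, exists2 w, L w & psi w = g) &
      (forall i : 'I_k,
         fa_recognizable (fun u v => [/\ L u, L v & psi v = gmul (psi u) (gens i)]))].

(* f : nat -> R, meaningful on [Q, oo); nondecreasing and nonnegative there *)
Definition in_frakF (Q : nat) (f : nat -> R) : Prop :=
  (forall n m, Q <= n -> n <= m -> Rle (f n) (f m)) /\
  (forall n, Q <= n -> Rle 0 (f n)).

(* h \preceq f, where h(n) = max { d_A(pi w, psi w) : w \in L, |w| <= n }.
   "h(n) <= K f(M n)" is written out as: every such distance is <= K f(M n).
   N >= Q ensures f is only evaluated on its domain (M >= 1). *)
Definition rep_function_preceq (G : grp) k (gens : 'I_k -> G)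
    (L : seq (letter k) -> Prop) (psi : seq (letter k) -> G)
    (Q : nat) (f : nat -> R) : Prop :=
  exists N K M : nat, [/\ Q <= N, 0 < K, 0 < M &
    forall n, N <= n -> forall w, L w -> size w <= n ->
      exists m : nat, word_dist_le gens (eval_word gens w) (psi w) m /\
                      Rle (INR m) (Rmult (INR K) (f (M * n)%N))].

Definition in_Bf (G : grp) (Q : nat) (f : nat -> R) : Prop :=
  exists k (gens : 'I_k -> G), generates gens /\
    exists L psi, cayley_automatic_rep gens L psi /\ rep_function_preceq gens L psi Q f.

From Stdlib Require Import Reals.
From mathcomp Require Import all_boot boolp zify.
Set Implicit Arguments. Unset Strict Implicit. Unset Printing Implicit Defensive.

(* Fix a right transversal r_1, ..., r_n of phi(H) in G, so that every element of G is
   uniquely phi(h) r_j. Then G is generated by the images of the generators of H together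
   with the r_j, and phi(h) r_j is represented by the word u r_j, where u represents h in
   the given Cayley automatic representation of H. Right multiplication by a generator a
   sends phi(h) r_j to phi(h h_j) r_j', where r_j a = phi(h_j) r_j'; so its graph is a
   finite union of the relations "right multiplication by h_j in H, with the markers r_j
   and r_j' appended", which are FA-recognizable because FA-recognizable relations are
   closed under converse and composition. Finally, u r_j evaluates to phi(pi u) r_j, so its
   distance to its representative is that of u conjugated by r_j: two letters longer. *)

Section RegularLanguages.
Variable T : finType.
Implicit Types (L : seq T -> Prop) (w : seq T) (D : dfa T).

Lemma eq_regular L1 L2 : (forall w, L1 w <-> L2 w) -> regular L1 -> regular L2.
Proof. by move=> eqL [D HD]; exists D => w; rewrite -eqL. Qed.

Lemma regular0 : regular (fun _ : seq T => False).
Proof. by exists (@Dfa T unit tt (fun _ => false) (fun _ _ => tt)). Qed.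

Definition dfa_prod (op : bool -> bool -> bool) D1 D2 : dfa T :=
  @Dfa T (dstate D1 * dstate D2)%type (dstart D1, dstart D2)
    (fun q => op (dfinal q.1) (dfinal q.2)) (fun q x => (dtrans q.1 x, dtrans q.2 x)).

Lemma dfa_prod_run op D1 D2 q w :
  foldl (@dtrans _ (dfa_prod op D1 D2)) q w =
  (foldl (@dtrans _ D1) q.1 w, foldl (@dtrans _ D2) q.2 w).
Proof. by elim: w q => [|x w IHw] [q1 q2] //=; rewrite IHw. Qed.

Lemma regular_dfa_prod (op : bool -> bool -> bool) (L1 L2 L : seq T -> Prop) :
  (forall w (b1 b2 : bool), (L1 w <-> b1) -> (L2 w <-> b2) -> (L w <-> op b1 b2)) ->
  regular L1 -> regular L2 -> regular L.
Proof.
move=> opL [D1 HD1] [D2 HD2]; exists (dfa_prod op D1 D2) => w.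
by rewrite /dfa_accepts dfa_prod_run; apply: opL.
Qed.

Lemma regularI L1 L2 : regular L1 -> regular L2 -> regular (fun w => L1 w /\ L2 w).
Proof.
apply: (@regular_dfa_prod andb) => w b1 b2 -> ->; exact: rwP andP.
Qed.

Lemma regularU L1 L2 : regular L1 -> regular L2 -> regular (fun w => L1 w \/ L2 w).
Proof.
apply: (@regular_dfa_prod orb) => w b1 b2 -> ->; exact: rwP orP.
Qed.

Lemma regular_exists (I : finType) (F : I -> seq T -> Prop) :
  (forall i, regular (F i)) -> regular (fun w => exists i, F i w).
Proof.
move=> regF; have regFs (s : seq I) : regular (fun w => exists2 i, i \in s & F i w).
  elim: s => [|i s IHs]; first by apply: eq_regular regular0 => w; split=> // -[].
  apply: eq_regular (regularU (regF i) IHs) => w; split.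
  - by case=> [Fw|[j js Fw]]; [exists i; rewrite ?mem_head|exists j; rewrite ?inE ?js ?orbT].
  - by case=> j; rewrite inE => /orP[/eqP->|js Fw]; [left|right; exists j].
apply: eq_regular (regFs (enum I)) => w.
by split=> [[i]|[i Fw]]; [exists i|exists i; rewrite ?mem_enum].
Qed.

Lemma regular_notin (a : T) : regular (fun w => a \notin w).
Proof.
exists (@Dfa T bool false negb (fun b x => b || (x == a))) => w.
rewrite /dfa_accepts /=.
suff runE b : foldl (fun b x => b || (x == a)) b w = b || (a \in w) by rewrite runE.
by elim: w b => [|x w IHw] b /=; rewrite ?orbF // IHw inE eq_sym orbA.
Qed.

End RegularLanguages.

Lemma regular_preim (T U : finType) (g : T -> U) (L : seq U -> Prop) :
  regular L -> regular (fun w => L (map g w)).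
Proof.
move=> [D HD]; exists (@Dfa T (dstate D) (dstart D) (@dfinal _ D) (fun q x => dtrans q (g x))).
move=> w; rewrite HD /dfa_accepts /=.
suff runE q : foldl (@dtrans _ D) q (map g w) = foldl (fun q x => dtrans q (g x)) q w.
  by rewrite runE.
by elim: w q => //= x w IHw q; rewrite IHw.
Qed.

Section NondeterministicAutomata.
Variable T : finType.
Implicit Types (L : seq T -> Prop) (w : seq T).

Record nfa := Nfa {
  nstate : finType;
  nstart : nstate -> Prop;
  nfinal : nstate -> Prop;
  ntrans : nstate -> T -> nstate -> Prop }.

Fixpoint nfa_accepts_from (N : nfa) (q : nstate N) w : Prop :=
  if w is x :: w' then exists2 q', ntrans q x q' & nfa_accepts_from q' w' else nfinal q.

Definition nfa_accepts (N : nfa) w := exists2 q : nstate N, nstart q & nfa_accepts_from q w.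

Definition powerset_dfa (N : nfa) : dfa T :=
  @Dfa T {set nstate N} [set q | `[< nstart q >]]
    (fun X => `[< exists2 q, q \in X & nfinal q >])
    (fun X x => [set q' | `[< exists2 q, q \in X & ntrans q x q' >]]).

Lemma powerset_dfa_run (N : nfa) X w :
  dfinal (foldl (@dtrans _ (powerset_dfa N)) X w) <-> exists2 q, q \in X & nfa_accepts_from q w.
Proof.
elim: w X => [|x w IHw] X /=; first by split=> /asboolP.
rewrite IHw; split.
- by case=> q' /[!inE] /asboolP[q qX tq] acc; exists q => //; exists q'.
- by case=> q qX [q' tq acc]; exists q' => //; rewrite inE; apply/asboolP; exists q.
Qed.

Lemma nfa_regular (N : nfa) L : (forall w, L w <-> nfa_accepts N w) -> regular L.
Proof.
move=> HN; exists (powerset_dfa N) => w; rewrite HN /dfa_accepts powerset_dfa_run.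
by split=> -[q qS acc]; exists q; rewrite // inE in qS *; apply/asboolP.
Qed.

Lemma regular_cat_nseq L (a : T) :
  regular L -> regular (fun w => exists y j, L y /\ w = y ++ nseq j a).
Proof.
move=> [D HD].
pose N := @Nfa (dstate D * bool)%type (fun q => q = (dstart D, false)) (fun q => dfinal q.1)
  (fun q x q' => x = a /\ q' = (q.1, true) \/ q.2 = false /\ q' = (dtrans q.1 x, false)).
have run_blank q w : nfa_accepts_from (N := N) (q, true) w <-> dfinal q /\ w = nseq (size w) a.
  elim: w => [|x w IHw] /=; first by split=> [|[]].
  split=> [[q' [[-> ->]|[]//]] /IHw[qF {1}->]//|[qF [-> wE]]].
  by exists (q, true); [left|apply/IHw].
have run q w : nfa_accepts_from (N := N) (q, false) w <->
    exists y j, dfinal (foldl (@dtrans _ D) q y) /\ w = y ++ nseq j a.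
  elim: w q => [|x w IHw] q /=.
    by split=> [qF|[[|? ?] [[|?] [//]]]]; exists [::], 0.
  split=> [[q' [[-> ->] /run_blank[qF wE]|[_ ->] /IHw[y [j [yF ->]]]]]|].
  - by exists [::], (size w).+1; rewrite /= -wE.
  - by exists (x :: y), j.
  case=> -[|z y] [j [/= yF]].
    case: j => [//|j] [-> ->]; exists (q, true); first by left.
    by apply/run_blank; rewrite size_nseq.
  case=> -> wE; exists (dtrans q z, false); first by right.
  by apply/IHw; exists y, j.
apply: (nfa_regular (N := N)) => w; split.
- by case=> y [j [/HD yF ->]]; exists (dstart D, false) => //; apply/run; exists y, j.
- by case=> _ -> /run[y [j [yF ->]]]; exists y, j; rewrite HD.
Qed.

End NondeterministicAutomata.

Lemma regular_image (T U : finType) (g : T -> U) (L : seq T -> Prop) :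
  regular L -> regular (fun y => exists2 w, L w & y = map g w).
Proof.
move=> [D HD].
pose N := @Nfa U (dstate D) (fun q => q = dstart D) (@dfinal _ D)
  (fun q y q' => exists2 x, y = g x & q' = dtrans q x).
have run q y : nfa_accepts_from (N := N) q y <->
    exists2 w, y = map g w & dfinal (foldl (@dtrans _ D) q w).
  elim: y q => [|y s IHs] q /=; first by split=> [|[[]//]]; exists [::].
  split=> [[q' [x -> ->] /IHs[w -> wF]]|[[//|x w] [-> sE] wF]]; first by exists (x :: w).
  by exists (dtrans q x); [exists x|apply/IHs; exists w].
apply: (nfa_regular (N := N)) => y; split.
- by case=> w /HD wF ->; exists (dstart D) => //; apply/run; exists w.
- by case=> _ -> /run[w -> wF]; exists w; rewrite ?HD.
Qed.

Section Padding.
Variable T : finType.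
Implicit Types u v : seq T.
Local Notation blank := ((None, None) : option T * option T).

Definition pad n u : seq (option T) := map Some u ++ nseq (n - size u) None.

Lemma size_pad n u : size u <= n -> size (pad n u) = n.
Proof. by move=> le_un; rewrite size_cat size_map size_nseq; lia. Qed.

Lemma size_pad_ge n u : size u <= size (pad n u).
Proof. by rewrite size_cat size_map leq_addr. Qed.

Lemma pad_cons n x u : pad n.+1 (x :: u) = Some x :: pad n u.
Proof. by []. Qed.

Lemma pmap_cat_nseq_None (a : seq (option T)) j : pmap id (a ++ nseq j None) = pmap id a.
Proof. by rewrite pmap_cat (_ : pmap id (nseq j None) = [::]) ?cats0 //; elim: j. Qed.

Lemma padK n u : pmap id (pad n u) = u.
Proof. by rewrite pmap_cat_nseq_None; elim: u => //= x u ->. Qed.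

Lemma pad_cat_nseq n j u : size u <= n -> pad n u ++ nseq j None = pad (n + j) u.
Proof. by move=> le_un; rewrite -catA -nseqD; congr (_ ++ nseq _ _); lia. Qed.

Lemma nth_pad n u i : nth None (pad n u) i = nth None (map Some u) i.
Proof. by rewrite nth_cat; case: ltnP => // le_ui; rewrite nth_nseq nth_default ?if_same. Qed.

Lemma conv_pad u v : conv u v = zip (pad (maxn (size u) (size v)) u) (pad (maxn (size u) (size v)) v).
Proof.
apply: (@eq_from_nth _ blank) => [|i].
  by rewrite size_map size_iota size1_zip ?size_pad //; lia.
rewrite size_map size_iota => lt_i.
by rewrite (nth_map 0) ?size_iota // nth_iota // nth_zip ?size_pad ?nth_pad //; lia.
Qed.

Lemma zip_pad_cat_nseq u v m j : size u <= m -> size v <= m ->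
  zip (pad m u) (pad m v) ++ nseq j blank = zip (pad (m + j) u) (pad (m + j) v).
Proof.
move=> le_um le_vm; rewrite -!pad_cat_nseq // zip_cat ?size_pad //.
by congr (_ ++ _); elim: j => //= j ->.
Qed.

Lemma conv_inj u v u' v' : conv u v = conv u' v' -> u = u' /\ v = v'.
Proof.
rewrite !conv_pad => eq_conv.
have [eq1 eq2] := (congr1 unzip1 eq_conv, congr1 unzip2 eq_conv).
rewrite !unzip1_zip ?unzip2_zip ?size_pad // in eq1 eq2; try lia.
by rewrite -(padK (maxn (size u) (size v)) u) eq1 -(padK (maxn (size u) (size v)) v) eq2 !padK.
Qed.

Lemma blank_notin_conv u v : blank \notin conv u v.
Proof.
have nth_some s i : i < size s -> nth None (map Some s) i != None.
  by elim: s i => [|x s IHs] [|i] //=; apply: IHs.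
apply/(nthP blank) => -[i]; rewrite size_map size_iota => lt_i.
rewrite (nth_map 0) ?size_iota // nth_iota // add0n => -[].
case: (ltnP i (size u)) => [/nth_some/eqP//|le_ui _].
by have /nth_some/eqP : i < size v by lia.
Qed.

Lemma conv_diag u : conv u u = map (fun t => (Some t, Some t)) u.
Proof.
apply: (@eq_from_nth _ blank) => [|i]; rewrite /conv !size_map size_iota maxnn // => lt_i.
rewrite (nth_map 0) ?size_iota // nth_iota // add0n.
by elim: u i lt_i => [|x u IHu] [|i] //= /IHu.
Qed.

Lemma conv_swap u v : map (fun p => (p.2, p.1)) (conv u v) = conv v u.
Proof. by rewrite /conv -map_comp maxnC. Qed.

Lemma pad_cat_nseqK n j a u : size a = n -> a ++ nseq j None = pad (n + j) u -> a = pad n u.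
Proof.
move=> size_a eq_pad; have uE : u = pmap id a.
  by rewrite -(padK (n + j) u) -eq_pad pmap_cat_nseq_None.
have le_un : size u <= n by rewrite uE -size_a size_pmap count_size.
move: eq_pad; rewrite -pad_cat_nseq // => /eqP; rewrite eqseq_cat ?size_pad //.
by case/andP=> /eqP.
Qed.
End Padding.

Section PaddedRelations.
Variable T : finType.
Implicit Types (R : seq T -> seq T -> Prop) (x : seq (option T * option T)).
Local Notation blank := ((None, None) : option T * option T).

Definition conv_lang R x := exists u v, R u v /\ x = conv u v.

(* Convolution followed by any number of blank columns: once a common length is fixed,
   relational composition can be read column by column. *)
Definition padded R x :=
  exists u v n, [/\ R u v, size u <= n, size v <= n & x = zip (pad n u) (pad n v)].

Lemma paddedE R x : padded R x <-> exists y j, conv_lang R y /\ x = y ++ nseq j blank.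
Proof.
split=> [[u [v [n [Ruv le_un le_vn ->]]]]|[_ [j [[u [v [Ruv ->]]] ->]]]].
  exists (conv u v), (n - maxn (size u) (size v)); split; first by exists u, v.
  by rewrite conv_pad zip_pad_cat_nseq ?leq_maxl ?leq_maxr //; congr (zip (pad _ _) (pad _ _)); lia.
exists u, v, (maxn (size u) (size v) + j); split; rewrite ?conv_pad ?zip_pad_cat_nseq //; lia.
Qed.

Lemma eq_fa_recognizable R1 R2 :
  (forall u v, R1 u v <-> R2 u v) -> fa_recognizable R1 -> fa_recognizable R2.
Proof. by move=> eqR; apply: eq_regular => x; split=> -[u [v [/eqR Ruv ->]]]; exists u, v. Qed.

Lemma fa_recognizable_exists (I : finType) (R : I -> seq T -> seq T -> Prop) :
  (forall i, fa_recognizable (R i)) -> fa_recognizable (fun u v => exists i, R i u v).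
Proof.
move/regular_exists; apply: eq_regular => x.
split=> [[i [u [v [Ruv ->]]]]|[u [v [[i Ruv] ->]]]]; last by exists i, u, v.
by exists u, v; split; first exists i.
Qed.

Lemma fa_recognizable_padded R : fa_recognizable R <-> regular (padded R).
Proof.
split=> [recR|regP].
  by apply: eq_regular (regular_cat_nseq blank recR) => x; rewrite paddedE.
apply: eq_regular (regularI regP (regular_notin blank)) => x; split.
  case=> /paddedE[y [[|j] [Ry ->]]]; rewrite ?cats0 // mem_cat mem_nseq eqxx.
  by rewrite orbT.
case=> u [v [Ruv xE]]; split; last by rewrite xE blank_notin_conv.
by apply/paddedE; exists x, 0; rewrite cats0; split=> //; exists u, v.
Qed.

Lemma fa_recognizable_swap R : fa_recognizable R -> fa_recognizable (fun u v => R v u).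
Proof.
move=> /(regular_preim (fun p : option T * option T => (p.2, p.1))).
apply: eq_regular => x; split=> [[u [v [Ruv xE]]]|[v [u [Rvu ->]]]].
  exists v, u; split=> //; rewrite -conv_swap -xE -map_comp map_id_in //; by case.
by exists u, v; rewrite conv_swap.
Qed.

Lemma fa_recognizable_eq (L : seq T -> Prop) : regular L -> fa_recognizable (fun u v => L u /\ v = u).
Proof.
move=> /(regular_image (fun t => (Some t, Some t))); apply: eq_regular => x.
split=> [[u Lu ->]|[u [_ [[Lu ->] ->]]]]; first by exists u, u; rewrite conv_diag.
by exists u; rewrite ?conv_diag.
Qed.

Lemma regular_diag R : fa_recognizable R -> regular (fun u => R u u).
Proof.
move=> /(regular_preim (fun t => (Some t, Some t))); apply: eq_regular => u.
split=> [[v [w [Rvw /esym]]]|Ruu]; last by exists u, u; rewrite conv_diag.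
by rewrite -conv_diag => /conv_inj[? ?]; subst.
Qed.
End PaddedRelations.

Section Composition.
Variable T : finType.
Implicit Types (R : seq T -> seq T -> Prop) (x : seq (option T * option T)) (y s : seq (option T)).

Definition rel_comp R1 R2 u w := exists2 v, R1 u v & R2 v w.

Lemma padded_zip R y1 y2 : size y1 = size y2 -> padded R (zip y1 y2) ->
  exists u v, [/\ R u v, y1 = pad (size y1) u & y2 = pad (size y1) v].
Proof.
move=> eq_size [u [v [n [Ruv le_un le_vn zE]]]]; exists u, v.
have nE : n = size y1 by move/(congr1 size): zE; rewrite !size1_zip ?size_pad ?eq_size.
have [eq1 eq2] := (congr1 unzip1 zE, congr1 unzip2 zE).
rewrite !unzip1_zip ?unzip2_zip ?size_pad ?eq_size // in eq1 eq2.
by rewrite -nE.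
Qed.

Lemma padded_comp_cut R1 R2 x : padded (rel_comp R1 R2) x ->
  exists y s, [/\ size y = size x,
    padded R1 (zip (unzip1 x ++ nseq (size s) None) (y ++ s)) &
    padded R2 (zip (y ++ s) (unzip2 x ++ nseq (size s) None))].
Proof.
case=> u [w [n [[v R1uv R2vw] le_un le_wn ->]]].
pose N := maxn n (size v); have le_nN : n <= N by exact: leq_maxl.
have size_vN : size (pad N v) = N by rewrite size_pad ?leq_maxr.
exists (take n (pad N v)), (drop n (pad N v)).
rewrite size1_zip ?unzip1_zip ?unzip2_zip ?size_pad ?size_takel ?size_vN //.
rewrite cat_take_drop size_drop size_vN !pad_cat_nseq // subnKC //.
by split=> //; [exists u, v, N|exists v, w, N]; split; rewrite ?leq_maxr //; lia.
Qed.

Lemma padded_comp_glue R1 R2 x y s : size y = size x ->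
  padded R1 (zip (unzip1 x ++ nseq (size s) None) (y ++ s)) ->
  padded R2 (zip (y ++ s) (unzip2 x ++ nseq (size s) None)) ->
  padded (rel_comp R1 R2) x.
Proof.
move=> size_y P1 P2.
have size_ys : size (y ++ s) = size x + size s by rewrite size_cat size_y.
have size_x1 : size (unzip1 x ++ nseq (size s) None) = size x + size s.
  by rewrite size_cat size_map size_nseq.
have size_x2 : size (unzip2 x ++ nseq (size s) None) = size x + size s.
  by rewrite size_cat size_map size_nseq.
have [u [v1 [R1uv x1E yE1]]] := padded_zip (etrans size_x1 (esym size_ys)) P1.
have [v2 [w [R2vw yE2 x2E]]] := padded_zip (etrans size_ys (esym size_x2)) P2.
rewrite size_x1 in x1E yE1; rewrite size_ys in yE2 x2E.
have v12 : v1 = v2 by rewrite -(padK (size x + size s) v1) -yE1 yE2 padK.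
have {}x1E := pad_cat_nseqK (size_map fst x) x1E.
have {}x2E := pad_cat_nseqK (size_map snd x) x2E.
exists u, w, (size x); split; first by exists v1; rewrite // v12.
- by have := size_pad_ge (size x) u; rewrite -x1E size_map.
- by have := size_pad_ge (size x) w; rewrite -x2E size_map.
- by rewrite -x1E -x2E zip_unzip.
Qed.

(* The middle word is guessed column by column. It may outlast both outer words, so a
   state is final if some blank-padded continuation of it is accepted by both automata. *)
Definition comp_nfa (D1 D2 : dfa (option T * option T)%type) : nfa (option T * option T)%type :=
  @Nfa _ (dstate D1 * dstate D2)%type (fun q => q = (dstart D1, dstart D2))
    (fun q => exists s, dfinal (foldl (@dtrans _ D1) q.1 (zip (nseq (size s) None) s)) /\
                        dfinal (foldl (@dtrans _ D2) q.2 (zip s (nseq (size s) None))))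
    (fun q a q' => exists b, q' = (dtrans q.1 (a.1, b), dtrans q.2 (b, a.2))).

Lemma comp_nfa_run D1 D2 q1 q2 x : nfa_accepts_from (N := comp_nfa D1 D2) (q1, q2) x <->
  exists y s, [/\ size y = size x,
    dfinal (foldl (@dtrans _ D1) q1 (zip (unzip1 x ++ nseq (size s) None) (y ++ s))) &
    dfinal (foldl (@dtrans _ D2) q2 (zip (y ++ s) (unzip2 x ++ nseq (size s) None)))].
Proof.
elim: x q1 q2 => [|a x IHx] q1 q2 /=.
  by split=> [[s [F1 F2]]|[[|? ?] [s [//= _ F1 F2]]]]; [exists [::], s|exists s].
split=> [[q' [b ->] /IHx[y [s [size_y F1 F2]]]]|[[|b y] [s [//= [size_y] F1 F2]]]].
  by exists (b :: y), s; rewrite /= size_y.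
by exists (dtrans q1 (a.1, b), dtrans q2 (b, a.2)); [exists b|apply/IHx; exists y, s].
Qed.

Lemma fa_recognizable_comp R1 R2 :
  fa_recognizable R1 -> fa_recognizable R2 -> fa_recognizable (rel_comp R1 R2).
Proof.
rewrite !fa_recognizable_padded => -[D1 HD1] [D2 HD2].
apply: (nfa_regular (N := comp_nfa D1 D2)) => x; split.
  case/padded_comp_cut=> y [s [size_y /HD1 F1 /HD2 F2]].
  by exists (dstart D1, dstart D2) => //; apply/comp_nfa_run; exists y, s.
case=> _ -> /comp_nfa_run[y [s [size_y F1 F2]]].
exact: padded_comp_glue size_y (proj2 (HD1 _) F1) (proj2 (HD2 _) F2).
Qed.
End Composition.

Section Marking.
Variables (T T' : finType) (e : T -> T') (d : T' -> option T).
Hypothesis eK : forall t, d (e t) = Some t.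

Definition marked (c : T') (s : seq (option T')) := exists u, s = pad (size s) (rcons (map e u) c).

Lemma regular_marked c : regular (marked c).
Proof.
pose N := @Nfa (option T') bool (fun b => b = false) (fun b => b = true)
  (fun b a b' => [\/ [/\ b = false, b' = false & exists t, a = Some (e t)],
                     [/\ b = false, b' = true & a = Some c] |
                     [/\ b = true, b' = true & a = None]]).
have run_blank s : nfa_accepts_from (N := N) true s <-> s = nseq (size s) None.
  elim: s => [|a s IHs] //=.
  split=> [[b' [[]//|[]//|[_ -> ->]] /IHs {1}->]//|[-> /IHs sE]].
  by exists true => //; apply: Or33.
have run s : nfa_accepts_from (N := N) false s <-> marked c s.
  elim: s => [|a s IHs] /=; first by split=> // -[[|? ?] ?].
  split=> [[b' [[_ -> [t ->]]|[_ -> ->]|[//]]]|[[|t u] /=]].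
  - by case/IHs=> u sE; exists (t :: u); rewrite /= pad_cons -sE.
  - by move/run_blank=> sE; exists [::]; rewrite /= pad_cons /pad /= subn0 -sE.
  - rewrite pad_cons => -[-> sE]; exists true; first exact: Or32.
    by apply/run_blank; rewrite sE /pad /= subn0 size_nseq.
  - rewrite pad_cons => -[-> sE]; exists false; first by apply: Or31; split=> //; exists t.
    by apply/IHs; exists u.
by apply: (nfa_regular (N := N)) => s; rewrite -run; split=> [|[_ -> //]]; exists false.
Qed.

Lemma map_obind_pad c n u : d c = None -> size u < n ->
  map (obind d) (pad n (rcons (map e u) c)) = pad n u.
Proof.
move=> dc lt_un; rewrite /pad size_rcons size_map map_cat !map_rcons map_nseq /= dc -cats1 -catA.
have -> : n - size u = (n - (size u).+1).+1 by lia.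
by congr (_ ++ _); elim: u {lt_un} => //= t u ->; rewrite eK.
Qed.

Variables (c c' : T').
Hypotheses (dc : d c = None) (dc' : d c' = None).

Definition mark_rel (R : seq T -> seq T -> Prop) u' v' :=
  exists u v, [/\ R u v, u' = rcons (map e u) c & v' = rcons (map e v) c'].

Definition decode2 (p : option T' * option T') := (obind d p.1, obind d p.2).

Lemma map_decode2_zip a b : map decode2 (zip a b) = zip (map (obind d) a) (map (obind d) b).
Proof. by elim: a b => [|x a IHa] [|y b] //=; rewrite IHa. Qed.

Lemma padded_markE R x : padded (mark_rel R) x <->
  [/\ padded R (map decode2 x), marked c (unzip1 x) & marked c' (unzip2 x)].
Proof.
split=> [[_ [_ [n [[u [v [Ruv -> ->]]] le_un le_vn ->]]]]|[Px [u1 x1E] [v1 x2E]]].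
  rewrite size_rcons size_map in le_un; rewrite size_rcons size_map in le_vn.
  rewrite map_decode2_zip !unzip1_zip ?unzip2_zip ?size_pad ?size_rcons ?size_map //.
  rewrite !map_obind_pad //; split; [exists u, v, n; split=> //; lia|exists u|exists v];
  by rewrite size_pad ?size_rcons ?size_map.
rewrite size_map in x1E; rewrite size_map in x2E.
have lt_u1 : size u1 < size x.
  by have := size_pad_ge (size x) (rcons (map e u1) c); rewrite -x1E size_map size_rcons size_map.
have lt_v1 : size v1 < size x.
  by have := size_pad_ge (size x) (rcons (map e v1) c'); rewrite -x2E size_map size_rcons size_map.
move: Px; rewrite -{1}(zip_unzip x) map_decode2_zip x1E x2E !map_obind_pad //.
case/padded_zip=> [|u [v [Ruv]]]; rewrite ?size_pad //; try lia.
move=> /(congr1 (pmap id)) /[!padK] eq_u /(congr1 (pmap id)) /[!padK] eq_v; subst u v.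
exists (rcons (map e u1) c), (rcons (map e v1) c'), (size x); split.
- by exists u1, v1.
- by rewrite size_rcons size_map.
- by rewrite size_rcons size_map.
- by rewrite -x1E -x2E zip_unzip.
Qed.

Lemma fa_recognizable_mark R : fa_recognizable R -> fa_recognizable (mark_rel R).
Proof.
rewrite !fa_recognizable_padded => /(regular_preim decode2) regR.
have regM := regularI regR (regularI (regular_preim fst (regular_marked c))
                                    (regular_preim snd (regular_marked c'))).
by apply: eq_regular regM => x; rewrite padded_markE; split=> [[? []]|[? ? ?]].
Qed.
End Marking.

Declare Scope grp_scope.
Local Notation "x * y" := (gmul x y) : grp_scope.
Local Notation "x ^-1" := (ginv x) : grp_scope.
Local Open Scope grp_scope.

Section GroupFacts.
Variable G : grp.
Implicit Types x y z : G.

Lemma gmulrV x : x * x^-1 = gone G.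
Proof. by rewrite -[LHS]gmul1 -[X in X * _](gmulV x^-1) -gmulA (gmulA x^-1) gmulV gmul1 gmulV. Qed.

Lemma gmulr1 x : x * gone G = x.
Proof. by rewrite -(gmulV x) gmulA gmulrV gmul1. Qed.

Lemma gmulKl x y : x^-1 * (x * y) = y.
Proof. by rewrite gmulA gmulV gmul1. Qed.

Lemma gmulKr x y : y * x * x^-1 = y.
Proof. by rewrite -gmulA gmulrV gmulr1. Qed.

Lemma gmulIl x y z : x * y = x * z -> y = z.
Proof. by move=> eq_xyz; rewrite -(gmulKl x y) eq_xyz gmulKl. Qed.

Lemma gmulIr x y z : y * x = z * x -> y = z.
Proof. by move=> eq_yzx; rewrite -(gmulKr x y) eq_yzx gmulKr. Qed.

Lemma ginv_uniq x y : x * y = gone G -> y = x^-1.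
Proof. by move=> xy1; apply: (@gmulIl x); rewrite xy1 gmulrV. Qed.

Lemma ginvM x y : (x * y)^-1 = y^-1 * x^-1.
Proof. by apply/esym/ginv_uniq; rewrite -gmulA (gmulA y) gmulrV gmul1 gmulrV. Qed.

Lemma eval_word_cat k (gens : 'I_k -> G) u v :
  eval_word gens (u ++ v) = eval_word gens u * eval_word gens v.
Proof. by elim: u => [|l u IHu] /=; rewrite ?gmul1 // IHu gmulA. Qed.

Lemma eval_word_rcons k (gens : 'I_k -> G) u l :
  eval_word gens (rcons u l) = eval_word gens u * letter_val gens l.
Proof. by rewrite -cats1 eval_word_cat /= gmulr1. Qed.
End GroupFacts.

Section Homomorphisms.
Variables (H G : grp) (phi : H -> G).
Hypothesis phi_hom : is_hom phi.

Lemma hom1 : phi (gone H) = gone G.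
Proof. by apply: (@gmulIl _ (phi (gone H))); rewrite -phi_hom gmul1 gmulr1. Qed.

Lemma homV x : phi x^-1 = (phi x)^-1.
Proof. by apply: ginv_uniq; rewrite -phi_hom gmulrV hom1. Qed.
End Homomorphisms.

Lemma In_nth (T : Type) (x0 x : T) (s : seq T) :
  List.In x s -> exists2 i, i < size s & nth x0 s i = x.
Proof.
elim: s => [|y s IHs] //= [->|/IHs[i lt_i <-]]; first by exists 0.
by exists i.+1.
Qed.

Lemma nth_In (T : Type) (x0 : T) (s : seq T) i : i < size s -> List.In (nth x0 s i) s.
Proof. by elim: s i => [|y s IHs] [|i] //= lt_i; [left|right; apply: IHs]. Qed.

Section Transversal.
Variables (H G : grp) (phi : H -> G).
Hypotheses (phi_hom : is_hom phi) (phi_inj : forall x y, phi x = phi y -> x = y).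

Definition same_coset (x y : G) := exists h, x = phi h * y.

Lemma same_coset_refl x : same_coset x x.
Proof. by exists (gone H); rewrite hom1 // gmul1. Qed.

Lemma same_coset_sym x y : same_coset x y -> same_coset y x.
Proof. by case=> h ->; exists h^-1; rewrite gmulA -phi_hom gmulV hom1 // gmul1. Qed.


Lemma coset_representatives (s : seq G) : exists t : seq G,
  (forall r, List.In r s -> exists2 x, List.In x t & same_coset r x) /\
  pairwise (fun x y => ~~ `[< same_coset x y >]) t.
Proof.
elim: s => [|r s [t [cover_t pw_t]]]; first by exists [::].
have [[x xt rx]|new_r] := pselect (exists2 x, List.In x t & same_coset r x).
  by exists t; split=> // r' /= [<-|/cover_t]; first by exists x.
exists (r :: t); split=> [r' /= [<-|/cover_t[x xt r'x]]|].
- by exists r; [left|apply: same_coset_refl].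
- by exists x; [right|].
rewrite /= pw_t andbT; apply/(all_nthP r) => i lt_i; apply/asboolP => r_i.
by apply: new_r; exists (nth r t i); [apply: nth_In|].
Qed.

Lemma right_transversal : finite_index_image phi -> exists t : seq G,
  (forall g, exists (j : 'I_(size t)) h, g = phi h * nth (gone G) t j) /\
  (forall (j j' : 'I_(size t)) h h',
     phi h * nth (gone G) t j = phi h' * nth (gone G) t j' -> j = j' /\ h = h').
Proof.
case=> reps cover_reps; have [t [cover_t /(pairwiseP (gone G)) pw_t]] := coset_representatives reps.
exists t; split=> [g|j j' h h' eq_hj].
  have [r [r_reps [h ->]]] := cover_reps g.
  have [x /(In_nth (gone G))[j lt_j <-] [h' ->]] := cover_t r r_reps.
  by exists (Ordinal lt_j), (h * h'); rewrite phi_hom gmulA.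
have same_jj' : same_coset (nth (gone G) t j) (nth (gone G) t j').
  by exists (h^-1 * h'); rewrite phi_hom homV // -gmulA -eq_hj gmulKl.
have eq_j : j = j'.
  apply: val_inj; case: (ltngtP j j') => // [lt_jj'|lt_j'j].
    by have /asboolP := pw_t j j' (ltn_ord j) (ltn_ord j') lt_jj'.
  by have /asboolP := pw_t j' j (ltn_ord j') (ltn_ord j) lt_j'j; case; apply: same_coset_sym.
by subst j'; split=> //; apply/phi_inj/(gmulIr eq_hj).
Qed.
End Transversal.

Section RightMultiplication.
Variables (G : grp) (k : nat) (gens : 'I_k -> G).
Variables (L : seq (letter k) -> Prop) (psi : seq (letter k) -> G).
Hypotheses (gens_gen : generates gens) (psi_rep : cayley_automatic_rep gens L psi).

Definition right_mul_rel (g : G) u v := [/\ L u, L v & psi v = psi u * g].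

Lemma fa_recognizable_right_mul1 : fa_recognizable (right_mul_rel (gone G)).
Proof.
case: psi_rep => regL psi_inj _ _.
apply: eq_fa_recognizable (fa_recognizable_eq regL) => u v; rewrite /right_mul_rel gmulr1.
by split=> [[Lu ->]|[Lu Lv /(psi_inj _ _ Lv Lu)]].
Qed.

Lemma fa_recognizable_right_mul_letter l : fa_recognizable (right_mul_rel (letter_val gens l)).
Proof.
case: psi_rep => _ _ _ rec_gens; case: l => i [] /=; last exact: rec_gens.
apply: eq_fa_recognizable (fa_recognizable_swap (rec_gens i)) => u v; rewrite /right_mul_rel /letter_val /=.
by split=> [[Lv Lu ->]|[Lu Lv ->]]; split; rewrite ?gmulKr // -gmulA gmulV gmulr1.
Qed.

Lemma right_mul_rel_mul g1 g2 u w :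
  rel_comp (right_mul_rel g1) (right_mul_rel g2) u w <-> right_mul_rel (g1 * g2) u w.
Proof.
case: psi_rep => _ _ psi_surj _; rewrite /rel_comp /right_mul_rel.
split=> [[v [Lu Lv ->] [_ Lw ->]]|[Lu Lw ->]]; first by split; rewrite ?gmulA.
by have [v Lv vE] := psi_surj (psi u * g1); exists v; split; rewrite ?vE ?gmulA.
Qed.

Lemma fa_recognizable_right_mul g : fa_recognizable (right_mul_rel g).
Proof.
have [c <-] := gens_gen g; elim: c => [|l c IHc] /=; first exact: fa_recognizable_right_mul1.
exact: eq_fa_recognizable (right_mul_rel_mul _ _) (fa_recognizable_comp (fa_recognizable_right_mul_letter l) IHc).
Qed.
End RightMultiplication.

Section FiniteIndexExtension.
Variables (G H : grp) (phi : H -> G).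
Hypothesis phi_hom : is_hom phi.
Variable t : seq G.
Local Notation n := (size t).
Local Notation rep j := (nth (gone G) t j).
Hypothesis rep_cover : forall g, exists (j : 'I_n) h, g = phi h * rep j.
Hypothesis rep_uniq :
  forall (j j' : 'I_n) h h', phi h * rep j = phi h' * rep j' -> j = j' /\ h = h'.
Variables (kH : nat) (gensH : 'I_kH -> H).
Variables (LH : seq (letter kH) -> Prop) (psiH : seq (letter kH) -> H).
Hypotheses (gensH_gen : generates gensH) (psiH_rep : cayley_automatic_rep gensH LH psiH).

Definition gensG (i : 'I_(kH + n)) : G :=
  match split i with inl j => phi (gensH j) | inr j => rep j end.

Definition emb (l : letter kH) : letter (kH + n) := (lshift n l.1, l.2).
Definition mark (j : 'I_n) : letter (kH + n) := (rshift kH j, false).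
Definition unemb (l : letter (kH + n)) : option (letter kH) :=
  if split l.1 is inl j then Some (j, l.2) else None.

Lemma embK l : unemb (emb l) = Some l.
Proof. by case: l => j b; rewrite /unemb /= (unsplitK (inl j)). Qed.

Lemma unemb_mark j : unemb (mark j) = None.
Proof. by rewrite /unemb /= (unsplitK (inr j)). Qed.

Lemma letter_val_emb l : letter_val gensG (emb l) = phi (letter_val gensH l).
Proof. by case: l => j [] /=; rewrite /letter_val /gensG /= (unsplitK (inl j)) ?homV. Qed.

Lemma letter_val_mark j : letter_val gensG (mark j) = rep j.
Proof. by rewrite /letter_val /gensG /= (unsplitK (inr j)). Qed.

Lemma eval_word_emb u : eval_word gensG (map emb u) = phi (eval_word gensH u).
Proof. by elim: u => [|l u IHu] /=; rewrite ?hom1 // IHu letter_val_emb phi_hom. Qed.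

Lemma eval_word_marked u j :
  eval_word gensG (rcons (map emb u) (mark j)) = phi (eval_word gensH u) * rep j.
Proof. by rewrite eval_word_rcons eval_word_emb letter_val_mark. Qed.

Lemma generates_gensG : generates gensG.
Proof.
move=> g; have [j [h ->]] := rep_cover g; have [c <-] := gensH_gen h.
by exists (rcons (map emb c) (mark j)); rewrite eval_word_marked.
Qed.

Definition LG w := exists u j, LH u /\ w = rcons (map emb u) (mark j).

(* The markers are erased by [pmap unemb], and the last letter names the coset. *)
Definition psiG w :=
  phi (psiH (pmap unemb w)) * (if w is l :: w' then letter_val gensG (last l w') else gone G).

Lemma psiG_marked u j : psiG (rcons (map emb u) (mark j)) = phi (psiH u) * rep j.
Proof.
rewrite /psiG; have -> : pmap unemb (rcons (map emb u) (mark j)) = u.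
  by rewrite -cats1 pmap_cat /= unemb_mark cats0; elim: u => //= l u ->; rewrite embK.
by case: (map emb u) => [|l s] /=; rewrite ?last_rcons letter_val_mark.
Qed.

Lemma regular_LG : regular LG.
Proof.
case: psiH_rep => regLH _ _ _.
have recLG j := fa_recognizable_mark embK (unemb_mark j) (unemb_mark j) (fa_recognizable_eq regLH).
apply: eq_regular (regular_diag (fa_recognizable_exists recLG)) => w; split.
  by case=> j [u [_ [[LHu ->] -> _]]]; exists u, j.
by case=> u [j [LHu ->]]; exists j, u, u.
Qed.

Lemma psiG_inj w w' : LG w -> LG w' -> psiG w = psiG w' -> w = w'.
Proof.
case: psiH_rep => _ psiH_inj _ _.
case=> u [j [LHu ->]] [u' [j' [LHu' ->]]]; rewrite !psiG_marked => /rep_uniq[<- eq_psi].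
by rewrite (psiH_inj _ _ LHu LHu' eq_psi).
Qed.

Lemma psiG_surj g : exists2 w, LG w & psiG w = g.
Proof.
case: psiH_rep => _ _ psiH_surj _.
have [j [h ->]] := rep_cover g; have [u LHu <-] := psiH_surj h.
by exists (rcons (map emb u) (mark j)); [exists u, j|rewrite psiG_marked].
Qed.

Lemma fa_recognizable_LG_mul i :
  fa_recognizable (fun w w' => [/\ LG w, LG w' & psiG w' = psiG w * gensG i]).
Proof.
have /choice[next nextE] (j : 'I_n) : exists p : 'I_n * H, rep j * gensG i = phi p.2 * rep p.1.
  by have [j' [h E]] := rep_cover (rep j * gensG i); exists (j', h).
have recR j : fa_recognizable
    (mark_rel emb (mark j) (mark (next j).1) (right_mul_rel LH psiH (next j).2)).
  apply: (fa_recognizable_mark embK (unemb_mark _) (unemb_mark _)).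
  exact: fa_recognizable_right_mul.
apply: eq_fa_recognizable (fa_recognizable_exists recR) => w w'; split.
  case=> j [u [v [[LHu LHv vE] -> ->]]].
  split; [by exists u, j|by exists v, (next j).1|].
  by rewrite !psiG_marked vE phi_hom -!gmulA nextE.
case=> -[u [j [LHu ->]]] [v [j' [LHv ->]]]; rewrite !psiG_marked -gmulA nextE gmulA -phi_hom.
by case/rep_uniq=> -> vE; exists j, u, v.
Qed.

Lemma cayley_automatic_extension : cayley_automatic_rep gensG LG psiG.
Proof. split; [exact: regular_LG|exact: psiG_inj|exact: psiG_surj|exact: fa_recognizable_LG_mul]. Qed.

(* A nonempty word gains two letters and [m + 2 <= 3 m]; the empty word stays empty. *)
Lemma word_dist_le_conj x y m (j : 'I_n) :
  word_dist_le gensH x y m -> word_dist_le gensG (phi x * rep j) (phi y * rep j) (3 * m)%N.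
Proof.
have conjE : (phi x * rep j)^-1 * (phi y * rep j) = (rep j)^-1 * (phi (x^-1 * y) * rep j).
  by rewrite ginvM phi_hom (homV phi_hom) -!gmulA.
case=> -[|l c] [size_c cE]; rewrite /word_dist_le conjE -cE.
  by exists [::]; rewrite /= hom1 // gmul1 gmulV.
exists ((rshift kH j, true) :: rcons (map emb (l :: c)) (mark j)); split.
  by move: size_c; rewrite /= size_rcons size_map /=; lia.
by rewrite -cat1s eval_word_cat eval_word_marked /= gmulr1 /letter_val /gensG /= (unsplitK (inr j)).
Qed.

Lemma rep_function_preceq_extension Q f :
  rep_function_preceq gensH LH psiH Q f -> rep_function_preceq gensG LG psiG Q f.
Proof.
case=> N [K [M [le_QN K_gt0 M_gt0 boundH]]]; exists N, (3 * K)%N, M; split=> //; first lia.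
move=> m le_Nm _ [u [j [LHu ->]]]; rewrite size_rcons size_map => /ltnW le_um.
have [d [dist_d le_d]] := boundH m le_Nm u LHu le_um.
exists (3 * d)%N; split; first by rewrite eval_word_marked psiG_marked; apply: word_dist_le_conj.
by rewrite !mult_INR Rmult_assoc; apply: Rmult_le_compat_l le_d; apply: pos_INR.
Qed.
End FiniteIndexExtension.

Theorem mainTheorem4 (G H : grp) (phi : H -> G) (Q : nat) (f : nat -> R) :
  finitely_generated G ->
  is_hom phi -> (forall x y, phi x = phi y -> x = y) ->
  finite_index_image phi ->
  in_frakF Q f ->
  in_Bf H Q f -> in_Bf G Q f.
Proof.
move=> _ phi_hom phi_inj /(right_transversal phi_hom phi_inj)[t [rep_cover rep_uniq]] _.
case=> kH [gensH [gensH_gen [LH [psiH [psiH_rep preceqH]]]]].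
exists (kH + size t), (gensG (t := t) phi gensH); split; first exact: generates_gensG.
exists (LG (t := t) LH), (psiG phi gensH psiH); split.
  exact: cayley_automatic_extension.
exact: rep_function_preceq_extension.
Qed.
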